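(* For every integer $n\ge 0$, \[ \sum_{k=0}^{n}(-4)^k\frac{\binom{n}{k}}{\binom{2k}{k}}H_{2k} =\frac{2H_{2n}-H_n}{2(2n-1)}-\frac{4n}{(2n-1)^2}. \]
   Context: For an integer $m\ge 0$, $H_m$ denotes the $m$-th harmonic number: $H_0=0$ and $H_m=\sum_{j=1}^m \frac1j$ for $m\ge1$. $\binom{n}{k}$ is the usual binomial coefficient. *)

From HB Require Import structures.
From mathcomp Require Import all_boot all_order all_algebra.
Set Implicit Arguments. Unset Strict Implicit. Unset Printing Implicit Defensive.
Import Order.TTheory GRing.Theory Num.Theory.
Local Open Scope ring_scope.

Definition harmonic (m : nat) : rat := \sum_(1 <= j < m.+1) (j%:R)^-1.

From HB Require Import structures.
From mathcomp Require Import all_boot all_order all_algebra.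
From mathcomp Require Import ring lra zify.
Import Order.TTheory GRing.Theory Num.Theory.
Local Open Scope ring_scope.

(* Both sides satisfy the inhomogeneous first-order recurrence
     (n+1)(2n+1) f(n+1) - (n+1)(2n-1) f(n) = (n+1)(2n+3) / ((2n-1)(2n+1))
   and vanish at n = 0.  For the closed form this is direct algebra with
   H_{2n+2} = H_{2n} + 1/(2n+1) + 1/(2n+2).  For the sum it is creative
   telescoping (Zeilberger): applied to the summand, the recurrence operator
   equals G(n,k+1) - G(n,k) for the certificate
     G(n,k) = (-4)^k C(n+1,k)/C(2k,k) (p(n,k) - k(2k-1) H_{2k}),
   with p quadratic in k; summing over 0 <= k <= n+1 leaves -G(n,0) = -p(n,0). *)

Lemma harmonicS m : harmonic m.+1 = harmonic m + (m%:R + 1)^-1.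
Proof. by rewrite /harmonic big_nat_recr //= -natr1. Qed.

Lemma harmonic_doubleS k :
  harmonic (2 * k.+1) = harmonic (2 * k) + (2 * k%:R + 1)^-1 + (2 * k%:R + 2)^-1.
Proof.
by rewrite mulnS !harmonicS -natr1 natrM addrA -addrA [1 + 1]addrC.
Qed.

Lemma central_binS_mul k :
  (k.+1 * k.+1 * 'C(2 * k.+1, k.+1) = (2 * k).+2 * (2 * k).+1 * 'C(2 * k, k))%N.
Proof.
have := mul_bin_diag (2 * k).+2 k; have := mul_bin_down (2 * k).+1 k.
have -> : ((2 * k).+1 - k = k.+1)%N by lia.
have -> : (2 * k.+1 = (2 * k).+2)%N by rewrite mulnS.
rewrite /=; nia.
Qed.

Lemma natrS_neq0 (R : numDomainType) m : (m%:R + 1 : R) != 0.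
Proof. by rewrite natr1 pnatr_eq0. Qed.

Lemma double_natr_sub1_neq0 (R : numDomainType) n : (2 * n%:R - 1 : R) != 0.
Proof. by rewrite subr_eq0 -natrM -[1]/(1%:R) eqr_nat; lia. Qed.

Section BinomialRatios.

Context {R : numFieldType}.

Lemma natr_binSr n k : (k <= n)%N ->
  'C(n, k.+1)%:R = (n%:R - k%:R) / (k%:R + 1) * 'C(n, k)%:R :> R.
Proof.
move=> le_kn; have := congr1 (GRing.natmul (1 : R)) (mul_bin_left n k).
rewrite !natrM natrB // -natr1 => eq_C.
by apply: (mulfI (natrS_neq0 R k)); rewrite eq_C; field; exact: natrS_neq0.
Qed.

Lemma natr_bin_predl n k : (k <= n.+1)%N ->
  'C(n, k)%:R = (n%:R + 1 - k%:R) / (n%:R + 1) * 'C(n.+1, k)%:R :> R.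
Proof.
move=> le_kn; have := congr1 (GRing.natmul (1 : R)) (mul_bin_down n.+1 k).
rewrite !natrM natrB // -natr1 /= => eq_C.
by apply: (mulfI (natrS_neq0 R n)); rewrite eq_C; field; exact: natrS_neq0.
Qed.

Lemma natr_central_binS k :
  'C(2 * k.+1, k.+1)%:R
  = (2 * k%:R + 2) * (2 * k%:R + 1) / (k%:R + 1) ^+ 2 * 'C(2 * k, k)%:R :> R.
Proof.
have := congr1 (GRing.natmul (1 : R)) (central_binS_mul k).
rewrite !natrM -!natr1 !natrM => eq_C.
have k1_neq0 := natrS_neq0 R k.
by apply: (mulfI (mulf_neq0 k1_neq0 k1_neq0)); rewrite eq_C; field.
Qed.

End BinomialRatios.

Lemma first_order_recurrence_uniq (R : idomainType) (a b c f g : nat -> R) :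
  (forall n, a n != 0) ->
  (forall n, a n * f n.+1 - b n * f n = c n) ->
  (forall n, a n * g n.+1 - b n * g n = c n) ->
  f 0%N = g 0%N -> forall n, f n = g n.
Proof.
move=> a_neq0 rec_f rec_g fg0; elim=> // n IH.
apply: (mulfI (a_neq0 n)).
by rewrite -[LHS](subrK (b n * f n)) rec_f IH -(rec_g n) subrK.
Qed.

Definition harm_term (n k : nat) : rat :=
  (-4 : rat) ^+ k * ('C(n, k)%:R / 'C(2 * k, k)%:R) * harmonic (2 * k).

Definition harm_sum (n : nat) : rat := \sum_(0 <= k < n.+1) harm_term n k.

Definition harm_closed_form (n : nat) : rat :=
  (2 * harmonic (2 * n) - harmonic n) / (2 * (2 * n%:R - 1))
  - 4 * n%:R / (2 * n%:R - 1) ^+ 2.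

Definition harm_certificate_poly (n k : nat) : rat :=
  - ((n%:R + 1) * (2 * n%:R + 3) / ((2 * n%:R - 1) * (2 * n%:R + 1)))
  + ((4 * n%:R + 1) / (2 * n%:R + 1) + 8 / (2 * n%:R - 1)) * k%:R
  - 4 / (2 * n%:R - 1) * k%:R ^+ 2.

Definition harm_certificate (n k : nat) : rat :=
  (-4 : rat) ^+ k * ('C(n.+1, k)%:R / 'C(2 * k, k)%:R)
  * (harm_certificate_poly n k - k%:R * (2 * k%:R - 1) * harmonic (2 * k)).

Lemma harm_term_telescoping n k : (k <= n.+1)%N ->
  (n%:R + 1) * (2 * n%:R + 1) * harm_term n.+1 k
  - (n%:R + 1) * (2 * n%:R - 1) * harm_term n k
  = harm_certificate n k.+1 - harm_certificate n k.
Proof.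
move=> le_kn; rewrite /harm_certificate /harm_certificate_poly /harm_term.
rewrite harmonic_doubleS natr_central_binS (natr_binSr _ _ le_kn) (natr_bin_predl _ _ le_kn).
have C_neq0 : ('C(2 * k, k)%:R : rat) != 0 by rewrite pnatr_eq0 -lt0n bin_gt0; lia.
have n_ge0 := ler0n rat n; have k_ge0 := ler0n rat k.
rewrite exprS -!natr1; field.
by rewrite double_natr_sub1_neq0 C_neq0 !gt_eqF //; lra.
Qed.

Lemma harm_sum_recurrence n :
  (n%:R + 1) * (2 * n%:R + 1) * harm_sum n.+1
  - (n%:R + 1) * (2 * n%:R - 1) * harm_sum n
  = (n%:R + 1) * (2 * n%:R + 3) / ((2 * n%:R - 1) * (2 * n%:R + 1)).
Proof.
have harm_sum_ext : harm_sum n = \sum_(0 <= k < n.+2) harm_term n k.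
  by rewrite [RHS]big_nat_recr //= /harm_term bin_small // mul0r mulr0 mul0r addr0.
rewrite harm_sum_ext /harm_sum !mulr_sumr -sumrB.
rewrite (telescope_sumr_eq (harm_certificate n)) //; last first.
  by move=> k /andP[_ lt_kn]; apply: harm_term_telescoping.
rewrite /harm_certificate bin_small // /harm_certificate_poly muln0 !bin0.
by rewrite !(mul0r, mulr0, subr0, addr0) expr0 div1r invr1 !mul1r sub0r opprK.
Qed.

Lemma harm_closed_form_recurrence n :
  (n%:R + 1) * (2 * n%:R + 1) * harm_closed_form n.+1
  - (n%:R + 1) * (2 * n%:R - 1) * harm_closed_form n
  = (n%:R + 1) * (2 * n%:R + 3) / ((2 * n%:R - 1) * (2 * n%:R + 1)).
Proof.
rewrite /harm_closed_form harmonic_doubleS harmonicS -natr1.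
have n_ge0 := ler0n rat n; field.
by rewrite double_natr_sub1_neq0 !gt_eqF //; lra.
Qed.

Theorem theorem1 (n : nat) :
  \sum_(0 <= k < n.+1)
      (-4 : rat) ^+ k * ('C(n, k)%:R / 'C(2 * k, k)%:R) * harmonic (2 * k)
  = (2 * harmonic (2 * n) - harmonic n) / (2 * (2 * n%:R - 1))
    - 4 * n%:R / (2 * n%:R - 1) ^+ 2.
Proof.
apply: (@first_order_recurrence_uniq _
  (fun m => (m%:R + 1) * (2 * m%:R + 1)) (fun m => (m%:R + 1) * (2 * m%:R - 1))
  (fun m => (m%:R + 1) * (2 * m%:R + 3) / ((2 * m%:R - 1) * (2 * m%:R + 1)))
  harm_sum harm_closed_form).
- by move=> m; rewrite mulf_neq0 // gt_eqF //; have := ler0n rat m; lra.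
- exact: harm_sum_recurrence.
- exact: harm_closed_form_recurrence.
- by rewrite /harm_sum /harm_closed_form big_nat1 /harm_term /harmonic !big_geq.
Qed.
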